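(* Let $\phi=(\phi_i)_{i\ge1}$ be a sequence of real numbers and define $\mathcal{H}_0^{\phi}=1$ and, for $n\ge0$, $\mathcal{H}_{n+1}^{\phi}(x)=2x\mathcal{H}_n^{\phi}(x)-(\mathcal{H}_n^{\phi})'(x)+\phi_{n+1}\mathcal{H}_n^{\phi}(x)$. For $n\ge0$ let $\Phi_0^n=1$ and $\Phi_i^n=\sum_{1\le j_1<\dots<j_i\le n}\phi_{j_1}\cdots\phi_{j_i}$ for $1\le i\le n$ (so that $\prod_{i=1}^n(x+\phi_i)=\sum_{j=0}^n\Phi^n_{n-j}x^j$). Then for every $n\ge0$, $$\mathcal{H}_n^{\phi}(x)=\sum_{j=0}^n\Phi_{n-j}^nH_j(x).$$ Moreover, for every $l\ge1$ and every $n\ge l-1$, $$\mathcal{H}_{n+1}^{\phi}(x)=2x\mathcal{H}_n^{\phi^{\{l\}}}(x)-(\mathcal{H}_n^{\phi^{\{l\}}})'(x)+\phi_l\,\mathcal{H}_n^{\phi^{\{l\}}}(x),$$ where $\phi^{\{l\}}$ is the sequence obtained from $\phi$ by removing the term $\phi_l$, i.e. $\phi^{\{l\}}_i=\phi_i$ for $1\le i\le l-1$ and $\phi^{\{l\}}_i=\phi_{i+1}$ for $i\ge l$.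
   Context: $H_j$ denotes the standard (physicists') Hermite polynomial of degree $j$ (orthogonal with respect to $e^{-x^2}$, leading coefficient $2^j$). *)

From HB Require Import structures.
From mathcomp Require Import all_boot all_order all_algebra.
From mathcomp Require Import reals.
Set Implicit Arguments. Unset Strict Implicit. Unset Printing Implicit Defensive.
Import Order.TTheory GRing.Theory Num.Theory.
Local Open Scope ring_scope.

Fixpoint hermite (R : realType) (n : nat) : {poly R} :=
  match n with
  | 0%N => 1
  | n'.+1 => 2%:P * 'X * hermite R n' - (hermite R n')^`()
  end.

(* The generalized Hermite polynomials H^phi_n; phi is indexed from 1
   (phi 0 is never used). *)
Fixpoint hermite_phi (R : realType) (phi : nat -> R) (n : nat) : {poly R} :=
  match n with
  | 0%N => 1
  | n'.+1 => 2%:P * 'X * hermite_phi phi n' - (hermite_phi phi n')^`()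
             + (phi n'.+1)%:P * hermite_phi phi n'
  end.

Definition Phi (R : realType) (phi : nat -> R) (n i : nat) : R :=
  \sum_(S : {set 'I_n} | #|S| == i) \prod_(j in S) phi (nat_of_ord j).+1.

Definition remove_term (R : realType) (phi : nat -> R) (l : nat) : nat -> R :=
  fun i => if (i < l)%N then phi i else phi i.+1.

From HB Require Import structures.
From mathcomp Require Import all_boot all_order all_algebra.
From mathcomp Require Import reals.
Set Implicit Arguments. Unset Strict Implicit. Unset Printing Implicit Defensive.
Import Order.TTheory GRing.Theory Num.Theory.
Local Open Scope ring_scope.

(* The linear map sending x^j to H_j intertwines multiplication by x with the
   raising operator h |-> 2xh - h', because H_{j+1} = 2x H_j - H_j'.  Hence
   H^phi_n is the image of prod_{1 <= i <= n} (x + phi_i), whose coefficients are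
   the Phi^n_i.  As this product does not depend on the order of its factors,
   the factor x + phi_l may be split off last instead of x + phi_{n+1}. *)

Section ProdXaddC.
Variable R : comNzRingType.

Lemma prod_XaddC_XsubC (s : seq R) :
  \prod_(a <- s) ('X + a%:P) = \prod_(b <- map -%R s) ('X - b%:P).
Proof. by rewrite big_map; apply: eq_bigr => a _; rewrite polyCN opprK. Qed.

Lemma size_prod_XaddC (s : seq R) : size (\prod_(a <- s) ('X + a%:P)) = (size s).+1.
Proof. by rewrite prod_XaddC_XsubC size_prod_XsubC size_map. Qed.

Lemma coef_prod_XaddC (s : seq R) j : (j <= size s)%N ->
  (\prod_(a <- s) ('X + a%:P))`_j =
    \sum_(I : {set 'I_(size s)} | #|I| == (size s - j)%N) \prod_(i in I) s`_i.
Proof.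
move=> le_js; rewrite prod_XaddC_XsubC coef_prod_XsubC size_map // mulr_sumr.
(* the signs (-1)^#|I| of the roots cancel against the prefactor *)
apply: eq_bigr => I /eqP cardI.
rewrite (eq_bigr (fun i : 'I_(size s) => - s`_i)) => [|i _]; last exact: nth_map.
by rewrite prodrN cardI mulrA -exprMn mulrNN mulr1 expr1n mul1r.
Qed.

End ProdXaddC.

Section HermiteExpansion.
Variable R : realType.
Implicit Types (c : R) (h q : {poly R}).

Definition hermite_raise h : {poly R} := 2%:P * 'X * h - h^`().

Definition hermite_expand q : {poly R} := \sum_(i < size q) (q`_i)%:P * hermite R i.

Lemma hermiteS n : hermite R n.+1 = hermite_raise (hermite R n).
Proof. by []. Qed.

Lemma hermite_raiseD : {morph hermite_raise : h1 h2 / h1 + h2}.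
Proof. by move=> h1 h2; rewrite /hermite_raise mulrDr derivD opprD addrACA. Qed.

Lemma hermite_raise0 : hermite_raise 0 = 0.
Proof. by rewrite /hermite_raise mulr0 deriv0 subr0. Qed.

Lemma hermite_raiseCM c h : hermite_raise (c%:P * h) = c%:P * hermite_raise h.
Proof.
by rewrite /hermite_raise derivM derivC mul0r add0r mulrBr mulrCA.
Qed.

Lemma hermite_expand_widen q m : (size q <= m)%N ->
  hermite_expand q = \sum_(i < m) (q`_i)%:P * hermite R i.
Proof.
move=> le_qm; rewrite /hermite_expand.
rewrite (big_ord_widen _ (fun i => (q`_i)%:P * hermite R i) le_qm) big_mkcond /=.
apply: eq_bigr => i _; case: ltnP => // le_qi.
by rewrite nth_default // mul0r.
Qed.

Lemma hermite_expand1 : hermite_expand 1 = 1.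
Proof. by rewrite /hermite_expand size_poly1 big_ord1 coefC mul1r. Qed.

Lemma hermite_expandD q1 q2 :
  hermite_expand (q1 + q2) = hermite_expand q1 + hermite_expand q2.
Proof.
pose m := maxn (size q1) (size q2).
rewrite !(@hermite_expand_widen _ m) ?leq_maxl ?leq_maxr ?size_polyD //.
by rewrite -big_split; apply: eq_bigr => i _; rewrite coefD polyCD mulrDl.
Qed.

Lemma hermite_expandCM c q : hermite_expand (c%:P * q) = c%:P * hermite_expand q.
Proof.
rewrite (@hermite_expand_widen _ (size q)); last by rewrite mul_polyC size_scale_leq.
by rewrite mulr_sumr; apply: eq_bigr => i _; rewrite coefCM polyCM mulrA.
Qed.

Lemma hermite_expandX q : hermite_expand ('X * q) = hermite_raise (hermite_expand q).
Proof.
rewrite (@hermite_expand_widen _ (size q).+1); last first.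
  by have [->|q_neq0] := eqVneq q 0; rewrite ?mulr0 ?size_poly0 // mulrC size_mulX.
rewrite big_ord_recl coefXM polyC0 mul0r add0r.
rewrite (big_morph _ hermite_raiseD hermite_raise0); apply: eq_bigr => i _.
by rewrite coefXM hermiteS hermite_raiseCM.
Qed.

Lemma hermite_expand_mulXaddC c q :
  hermite_expand (('X + c%:P) * q) =
    hermite_raise (hermite_expand q) + c%:P * hermite_expand q.
Proof. by rewrite mulrDl hermite_expandD hermite_expandX hermite_expandCM. Qed.

End HermiteExpansion.

Section PhiProduct.
Variable R : realType.
Implicit Types phi : nat -> R.

Definition phi_prod phi n : {poly R} := \prod_(1 <= i < n.+1) ('X + (phi i)%:P).

Lemma phi_prodE phi n :
  phi_prod phi n = \prod_(a <- mkseq (fun i => phi i.+1) n) ('X + a%:P).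
Proof. by rewrite /phi_prod big_add1 big_map /index_iota subn0. Qed.

Lemma phi_prodS phi n : phi_prod phi n.+1 = ('X + (phi n.+1)%:P) * phi_prod phi n.
Proof. by rewrite /phi_prod big_nat_recr // mulrC. Qed.

Lemma size_phi_prod phi n : size (phi_prod phi n) = n.+1.
Proof. by rewrite phi_prodE size_prod_XaddC size_mkseq. Qed.

Lemma coef_phi_prod phi n j : (j <= n)%N -> (phi_prod phi n)`_j = Phi phi n (n - j).
Proof.
move=> le_jn; rewrite phi_prodE coef_prod_XaddC size_mkseq //.
by apply: eq_bigr => I _; apply: eq_bigr => i _; rewrite nth_mkseq.
Qed.

Lemma phi_prod_remove_term phi l n : (0 < l <= n.+1)%N ->
  phi_prod phi n.+1 = ('X + (phi l)%:P) * phi_prod (remove_term phi l) n.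
Proof.
case/andP=> l_gt0 le_ln; rewrite /phi_prod.
rewrite (@big_cat_nat _ _ _ l 1 n.+2) ?(leqW le_ln) // (@big_cat_nat _ _ _ l 1 n.+1) //.
rewrite [\prod_(l <= i < n.+2) _]big_ltn //= mulrCA; congr (_ * (_ * _)).
  by apply: eq_big_nat => i /andP[_ lt_il]; rewrite /remove_term lt_il.
rewrite big_add1 /=; apply: eq_big_nat => i /andP[le_li _].
by rewrite /remove_term ltnNge le_li.
Qed.

Lemma hermite_phi_expand phi n : hermite_phi phi n = hermite_expand (phi_prod phi n).
Proof.
elim: n => [|n IHn]; first by rewrite /phi_prod big_geq // hermite_expand1.
by rewrite phi_prodS hermite_expand_mulXaddC -IHn.
Qed.

End PhiProduct.

Theorem lemma3p5 (R : realType) (phi : nat -> R) :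
  (forall n : nat,
     hermite_phi phi n = \sum_(0 <= j < n.+1) (Phi phi n (n - j))%:P * hermite R j)
  /\
  (forall l n : nat, (1 <= l)%N -> (l.-1 <= n)%N ->
     hermite_phi phi n.+1 =
       2%:P * 'X * hermite_phi (remove_term phi l) n
       - (hermite_phi (remove_term phi l) n)^`()
       + (phi l)%:P * hermite_phi (remove_term phi l) n).
Proof.
split=> [n | l n l_gt0 le_l1n].
  rewrite hermite_phi_expand (@hermite_expand_widen _ _ n.+1); last by rewrite size_phi_prod.
  by rewrite big_mkord; apply: eq_bigr => j _; rewrite coef_phi_prod // -ltnS.
have le_ln : (0 < l <= n.+1)%N by rewrite l_gt0 -[l]prednK.
by rewrite !hermite_phi_expand (phi_prod_remove_term _ le_ln) hermite_expand_mulXaddC.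
Qed.
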